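(* Let $\mathfrak{g}=\mathfrak{sl}_3\oplus\mathfrak{sl}_3\oplus\mathfrak{sl}_3$ over an algebraically closed field $\mathbb{K}$ of characteristic zero and let $\mathfrak{h}=\{(x,x,x):x\in\mathfrak{sl}_3\}$ be the diagonal subalgebra. Then $c(\mathfrak{g},\mathfrak{h})=1$ and $\mathrm{rk}(\mathfrak{g},\mathfrak{h})=6$.
   Context: Complexity of a pair: for a reductive Lie algebra $\mathfrak{g}$ over $\mathbb{K}$, let $G$ be a connected algebraic group with Lie algebra $\mathfrak{g}$ acting on $\mathfrak{g}$ by the adjoint action $\mathrm{Ad}$, and let $\mathfrak{b}$ be a Borel subalgebra of $\mathfrak{g}$. For a subalgebra $\mathfrak{h}\subseteq\mathfrak{g}$, the complexity $c(\mathfrak{g},\mathfrak{h})$ is the minimum over $g\in G$ of $\operatorname{codim}_{\mathfrak{g}}(\mathfrak{h}+\mathrm{Ad}(g)\mathfrak{b})$. Rank of a pair: $\mathrm{rk}(\mathfrak{g},\mathfrak{h})$ is the rank of the homogeneous space $G/H$, where $H\subseteq G$ is the connected subgroup with Lie algebra $\mathfrak{h}$, i.e. the rank of the lattice of weights of $B$-semi-invariant rational functions on $G/H$, $B\subseteq G$ a Borel subgroup. *)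

From HB Require Import structures.
From mathcomp Require Import all_boot all_order all_algebra.
Set Implicit Arguments. Unset Strict Implicit. Unset Printing Implicit Defensive.
Import Order.TTheory GRing.Theory Num.Theory.
Local Open Scope ring_scope.

(* Elements of gl_3^3 (ambient of g = sl_3^3) and of SL_3^3 are triples of 3x3 matrices. *)
Definition trip (K : fieldType) := ('M[K]_3 * 'M[K]_3 * 'M[K]_3)%type.

Definition comp (K : fieldType) (t : trip K) (k : 'I_3) : 'M[K]_3 :=
  if k == 0%N :> nat then t.1.1 else if k == 1%N :> nat then t.1.2 else t.2.

Definition tmul (K : fieldType) (s t : trip K) : trip K :=
  (s.1.1 *m t.1.1, s.1.2 *m t.1.2, s.2 *m t.2).
Definition tinv (K : fieldType) (t : trip K) : trip K :=
  (invmx t.1.1, invmx t.1.2, invmx t.2).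
Definition tdiag (K : fieldType) (X : 'M[K]_3) : trip K := (X, X, X).

Definition inSL3 (K : fieldType) (X : 'M[K]_3) : bool := \det X == 1.
Definition inG (K : fieldType) (t : trip K) : bool :=
  [&& inSL3 t.1.1, inSL3 t.1.2 & inSL3 t.2].
Definition upper (K : fieldType) (X : 'M[K]_3) : bool :=
  [forall i : 'I_3, forall j : 'I_3, (j < i)%N ==> (X i j == 0)].
Definition inB (K : fieldType) (t : trip K) : bool :=
  inG t && [forall k : 'I_3, upper (comp t k)].

Definition trace_form (K : fieldType) (X : 'M[K]_3) : 'M[K]_1 := (\tr X)%:M.
Definition lower_part (K : fieldType) (X : 'M[K]_3) : 'M[K]_3 :=
  \matrix_(i, j) (if (j < i)%N then X i j else 0).

Definition sl3 (K : fieldType) : {vspace 'M[K]_3} := lker (linfun (@trace_form K)).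
Definition b3 (K : fieldType) : {vspace 'M[K]_3} :=
  (sl3 K :&: lker (linfun (@lower_part K)))%VS.

Definition inj1 (K : fieldType) (X : 'M[K]_3) : trip K := (X, 0, 0).
Definition inj2 (K : fieldType) (X : 'M[K]_3) : trip K := (0, X, 0).
Definition inj3 (K : fieldType) (X : 'M[K]_3) : trip K := (0, 0, X).

Definition gLie (K : fieldType) : {vspace trip K} :=
  (linfun (@inj1 K) @: sl3 K + linfun (@inj2 K) @: sl3 K + linfun (@inj3 K) @: sl3 K)%VS.
Definition bLie (K : fieldType) : {vspace trip K} :=
  (linfun (@inj1 K) @: b3 K + linfun (@inj2 K) @: b3 K + linfun (@inj3 K) @: b3 K)%VS.
Definition hdiag (K : fieldType) : {vspace trip K} := (linfun (@tdiag K) @: sl3 K)%VS.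

Definition Ad (K : fieldType) (g : trip K) (t : trip K) : trip K :=
  (g.1.1 *m t.1.1 *m invmx g.1.1, g.1.2 *m t.1.2 *m invmx g.1.2, g.2 *m t.2 *m invmx g.2).

Definition codim_at (K : fieldType) (h : {vspace trip K}) (g : trip K) : nat :=
  (\dim (gLie K) - \dim (h + linfun (Ad g) @: bLie K))%N.

Definition is_complexity (K : fieldType) (h : {vspace trip K}) (c : nat) : Prop :=
  (exists2 g, inG g & codim_at h g = c) /\ (forall g, inG g -> (c <= codim_at h g)%N).

Inductive polyfun (K : fieldType) : (trip K -> K) -> Prop :=
| pf_const (c : K) : polyfun (fun _ => c)
| pf_coord (k i j : 'I_3) : polyfun (fun t => comp t k i j)
| pf_add (p q : trip K -> K) : polyfun p -> polyfun q -> polyfun (fun t => p t + q t)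
| pf_mul (p q : trip K -> K) : polyfun p -> polyfun q -> polyfun (fun t => p t * q t).

(* A rational function on G is p/q with p, q regular and q not identically 0 on G
   (G is irreducible, so identities of rational functions are checked as
   polynomial identities after clearing denominators, pointwise on G). *)
Definition ratfun (K : fieldType) (p q : trip K -> K) : Prop :=
  [/\ polyfun p, polyfun q & exists2 g, inG g & q g != 0].

(* H = diagonal SL_3 in G (connected subgroup with Lie algebra hdiag);
   K(G/H) = right-H-invariant rational functions on G. *)
Definition rightH_inv (K : fieldType) (p q : trip K -> K) : Prop :=
  forall g x, inG g -> inSL3 x ->
    p (tmul g (tdiag x)) * q g = p g * q (tmul g (tdiag x)).

(* Characters of B (they factor through T = diagonal); for SL_3 every character
   of T is uniquely t |-> t_00^a t_11^b, so X(B) = Z^6, lambda : 'rV[int]_6. *)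
Definition widx (k : 'I_3) (i : 'I_2) : 'I_6 := inord (2 * k + i).
Definition widx_row (i : 'I_2) : 'I_3 := widen_ord (isT : (2 <= 3)%N) i.
Definition character (K : fieldType) (lam : 'rV[int]_6) (b : trip K) : K :=
  \prod_(k < 3) \prod_(i < 2) (comp b k (widx_row i) (widx_row i)) ^ (lam 0 (widx k i)).

Definition is_weight (K : fieldType) (lam : 'rV[int]_6) : Prop :=
  exists p q : trip K -> K,
    [/\ ratfun p q, rightH_inv p q, (exists2 g, inG g & p g != 0) &
        forall b g, inB b -> inG g ->
          p (tmul (tinv b) g) * q g = character lam b * p g * q (tmul (tinv b) g)].

Definition in_set_rows (L : 'rV[int]_6 -> Prop) (r : nat) (M : 'M[rat]_(r, 6)) : Prop :=
  forall i : 'I_r, exists2 lam, L lam & row i M = map_mx (fun z : int => z%:~R) lam.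
Definition has_rank (L : 'rV[int]_6 -> Prop) (r : nat) : Prop :=
  (exists M : 'M[rat]_(r, 6), in_set_rows L M /\ row_free M) /\
  (forall M : 'M[rat]_(r.+1, 6), in_set_rows L M -> ~~ row_free M).

Definition rank_GH (K : fieldType) (r : nat) : Prop := has_rank (@is_weight K) r.

(* Complexity: dim h + dim b = 8 + 15 = 23 = dim g - 1, so h + Ad(g) b has
   codimension at least 1 for every g, with equality exactly when h meets
   Ad(g) b trivially.  Take g = (1, w0, u) with w0 the longest Weyl element and
   u lower unipotent.  If (x, x, x) lies in Ad(g) b, then x is upper triangular,
   lower triangular (a w0-conjugate of an upper triangular matrix) and has all
   row sums equal (a u-conjugate of one); so x is scalar, and being traceless
   it vanishes when char K <> 3.

   Rank: determinants of 3x3 matrices whose rows are taken among the last two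
   rows of the three factors, det(g_i[2], g_j[1], g_j[2]) and
   det(g_0[2], g_1[2], g_2[2]), are invariant under right multiplication by the
   diagonal SL_3 and are B-eigenfunctions, because left multiplication by an
   upper triangular matrix acts triangularly on the last rows.  Six of them
   have linearly independent weights, and 6 is the rank of the character
   lattice of B. *)

From Pilot Require Import Defs.
From HB Require Import structures.
From mathcomp Require Import all_boot all_order all_algebra.
From mathcomp Require Import ring.
Set Implicit Arguments. Unset Strict Implicit. Unset Printing Implicit Defensive.
Import GRing.Theory.
Local Open Scope ring_scope.

Definition o0 : 'I_3 := @Ordinal 3 0 isT.
Definition o1 : 'I_3 := @Ordinal 3 1 isT.
Definition o2 : 'I_3 := @Ordinal 3 2 isT.

(* Rewriting with [entryE] puts every entry of an expanded 3x3 computation in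
   the form [A (inord i) (inord j)] with numerals [i], [j], so that [ring]
   recognises equal entries reached through different ordinal terms. *)
Definition entry (T : Type) m n (A : 'M[T]_(m.+1, n.+1)) (i j : nat) :=
  A (inord i) (inord j).
Lemma entryE (T : Type) m n (A : 'M[T]_(m.+1, n.+1)) i j : A i j = entry A i j.
Proof. by rewrite /entry !inord_val. Qed.

Section ThreeByThree.
Variable R : comNzRingType.
Implicit Types A B C X : 'M[R]_3.

(* Signs are written as products with [-1], so that [det3] of coordinate
   functions is literally built from the constructors of [polyfun]. *)
Definition det3 (a b c : 'I_3 -> R) : R :=
  a o0 * b o1 * c o2 + (-1) * (a o0 * b o2 * c o1) + (-1) * (a o1 * b o0 * c o2)
  + a o1 * b o2 * c o0 + a o2 * b o0 * c o1 + (-1) * (a o2 * b o1 * c o0).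

Lemma det3E A : \det A = det3 (A o0) (A o1) (A o2).
Proof.
rewrite (expand_det_row _ o0) !big_ord_recr big_ord0 /= /cofactor.
rewrite !(expand_det_row _ ord0) !big_ord_recr !big_ord0 /= /cofactor.
by rewrite !det_mx11 !mxE /det3 !(entryE A) /=; ring.
Qed.

Lemma det3_mulmxr A B C X (r s u : 'I_3) :
  det3 ((A *m X) r) ((B *m X) s) ((C *m X) u) = det3 (A r) (B s) (C u) * \det X.
Proof.
rewrite det3E /det3 !mxE !big_ord_recr !big_ord0 /=.
by rewrite !(entryE A) !(entryE B) !(entryE C) !(entryE X) /=; ring.
Qed.

Definition upper3 A := [/\ A o1 o0 = 0, A o2 o0 = 0 & A o2 o1 = 0].

Lemma det_upper3 A : upper3 A -> \det A = A o0 o0 * A o1 o1 * A o2 o2.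
Proof. by case=> a10 a20 a21; rewrite det3E /det3 a10 a20 a21; ring. Qed.

(* An upper triangular left factor scales row 2 and adds to row 1 a multiple
   of row 2. *)
Lemma det3_upper_mull_pair A B C X : upper3 A -> upper3 B ->
  det3 ((A *m X) o2) ((B *m C) o1) ((B *m C) o2) =
  A o2 o2 * B o1 o1 * B o2 o2 * det3 (X o2) (C o1) (C o2).
Proof.
rewrite /upper3 /det3 !mxE !big_ord_recr !big_ord0 /=.
rewrite !(entryE A) !(entryE B) !(entryE C) !(entryE X) /=.
by move=> [_ -> ->] [-> -> ->]; ring.
Qed.

Lemma det3_upper_mull_bottom A B C X Y Z : upper3 A -> upper3 B -> upper3 C ->
  det3 ((A *m X) o2) ((B *m Y) o2) ((C *m Z) o2) =
  A o2 o2 * B o2 o2 * C o2 o2 * det3 (X o2) (Y o2) (Z o2).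
Proof.
rewrite /upper3 /det3 !mxE !big_ord_recr !big_ord0 /=.
rewrite !(entryE A) !(entryE B) !(entryE C) !(entryE X) !(entryE Y) !(entryE Z) /=.
by move=> [_ -> ->] [_ -> ->] [_ -> ->]; ring.
Qed.

Lemma trace3 A : \tr A = A o0 o0 + A o1 o1 + A o2 o2.
Proof. by rewrite /mxtrace !big_ord_recr big_ord0 /= !(entryE A) /= add0r. Qed.

End ThreeByThree.

Section Weights.
Variable K : fieldType.
Implicit Types (b g t : trip K) (x : 'M[K]_3).

Lemma comp_tmul s t k : Defs.comp (tmul s t) k = Defs.comp s k *m Defs.comp t k.
Proof. by rewrite /Defs.comp; case: ifP => //; case: ifP. Qed.

Lemma comp_tdiag x k : Defs.comp (tdiag x) k = x.
Proof. by rewrite /Defs.comp; case: ifP => //; case: ifP. Qed.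

Lemma upper3P x : upper x -> upper3 x.
Proof.
move=> /forallP ux; split.
- by have /forallP/(_ o0)/implyP/(_ isT)/eqP := ux o1.
- by have /forallP/(_ o0)/implyP/(_ isT)/eqP := ux o2.
- by have /forallP/(_ o1)/implyP/(_ isT)/eqP := ux o2.
Qed.

Lemma inB_upper3 b k : inB b -> upper3 (Defs.comp b k).
Proof. by case/andP => _ /forallP /(_ k) /upper3P. Qed.

Lemma inB_diag_prod b k : inB b ->
  Defs.comp b k o0 o0 * Defs.comp b k o1 o1 * Defs.comp b k o2 o2 = 1.
Proof.
move=> bB; rewrite -det_upper3; last exact: inB_upper3.
case/andP: bB => /and3P [/eqP d1 /eqP d2 /eqP d3] _.
by rewrite /Defs.comp; case: ifP => _; [|case: ifP].
Qed.

Lemma tmulKV b g : inG b -> tmul b (tmul (tinv b) g) = g.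
Proof.
case: b g => [[b1 b2] b3] [[g1 g2] g3] /and3P [/eqP d1 /eqP d2 /eqP d3].
by rewrite /tmul /tinv /= !mulKVmx // unitmxE ?d1 ?d2 ?d3 unitr1.
Qed.

Lemma inG1 : inG ((1%:M, 1%:M, 1%:M) : trip K).
Proof. by rewrite /inG /inSL3 /= det1 eqxx. Qed.

Lemma semi_invariant_weight (lam : 'rV[int]_6) (p : trip K -> K) :
  polyfun p -> (forall g x, inSL3 x -> p (tmul g (tdiag x)) = p g) ->
  (forall b g, inB b -> character lam b * p (tmul b g) = p g) ->
  (exists2 g, inG g & p g != 0) -> is_weight K lam.
Proof.
move=> pp pH pB pnz; exists p, (fun _ => 1); split => //.
- by split; [|exact: pf_const|exists (1%:M, 1%:M, 1%:M); [exact: inG1|exact: oner_neq0]].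
- by move=> g x _ xSL; rewrite pH.
- move=> b g bB _; have bG : inG b by case/andP: bB.
  by rewrite -{2}(tmulKV g bG) pB // !mulr1.
Qed.

Definition minor (p1 p2 p3 : 'I_3 * 'I_3) t : K :=
  det3 (Defs.comp t p1.1 p1.2) (Defs.comp t p2.1 p2.2) (Defs.comp t p3.1 p3.2).

Lemma polyfun_minor p1 p2 p3 : polyfun (minor p1 p2 p3).
Proof.
rewrite /minor /det3.
by repeat first [apply: pf_add | apply: pf_mul | apply: pf_const | apply: pf_coord].
Qed.

Lemma minor_rightH p1 p2 p3 t x : inSL3 x ->
  minor p1 p2 p3 (tmul t (tdiag x)) = minor p1 p2 p3 t.
Proof.
by move=> /eqP detx; rewrite /minor !comp_tmul !comp_tdiag det3_mulmxr detx mulr1.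
Qed.

Lemma minor_weight p1 p2 p3 (d : trip K -> K) (lam : 'rV[int]_6) :
  (forall b t, inB b -> minor p1 p2 p3 (tmul b t) = d b * minor p1 p2 p3 t) ->
  (forall b, inB b -> character lam b * d b = 1) ->
  (exists2 g, inG g & minor p1 p2 p3 g != 0) -> is_weight K lam.
Proof.
move=> semi chi nz; apply: semi_invariant_weight nz; first exact: polyfun_minor.
  by move=> g x; apply: minor_rightH.
by move=> b g bB; rewrite semi // mulrA chi // mul1r.
Qed.

Lemma minor_pair_mull b t (i j : 'I_3) : inB b ->
  minor (i, o2) (j, o1) (j, o2) (tmul b t) =
  Defs.comp b i o2 o2 * Defs.comp b j o1 o1 * Defs.comp b j o2 o2 *
  minor (i, o2) (j, o1) (j, o2) t.
Proof. by move=> bB; rewrite /minor !comp_tmul det3_upper_mull_pair //; apply: inB_upper3. Qed.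

Lemma minor_bottom_mull b t : inB b ->
  minor (o0, o2) (o1, o2) (o2, o2) (tmul b t) =
  Defs.comp b o0 o2 o2 * Defs.comp b o1 o2 o2 * Defs.comp b o2 o2 o2 *
  minor (o0, o2) (o1, o2) (o2, o2) t.
Proof. by move=> bB; rewrite /minor !comp_tmul det3_upper_mull_bottom //; apply: inB_upper3. Qed.

Definition cyc : 'M[K]_3 := \matrix_(i, j) (j == (i.+1 %% 3)%N :> nat)%:R.

Lemma det_cyc : \det cyc = 1.
Proof. by rewrite det3E /det3 !mxE /=; ring. Qed.

Definition trip_at (k : 'I_3) x : trip K :=
  (if k == o0 then x else 1%:M, if k == o1 then x else 1%:M, if k == o2 then x else 1%:M).

Lemma minor_pair_weight (i j : 'I_3) (lam : 'rV[int]_6) : i != j ->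
  (forall b, character lam b =
             Defs.comp b i o0 o0 * Defs.comp b i o1 o1 * Defs.comp b j o0 o0) ->
  is_weight K lam.
Proof.
move=> ij chi; apply: (minor_weight (fun b t => @minor_pair_mull b t i j)) => [b bB|].
  rewrite chi -[1](mulr1 1) -{1}(inB_diag_prod i bB) -(inB_diag_prod j bB); ring.
clear chi; exists (trip_at i cyc);
move: i j ij => [[|[|[|//]]] ?] [[|[|[|//]]] ?] //= _;
  rewrite /inG /inSL3 /minor /det3 /trip_at /= ?det_cyc ?det1 ?eqxx //= !mxE /=;
  by rewrite !(mulr0, mul0r, mulr1, addr0) oner_neq0.
Qed.

Lemma minor_bottom_weight (lam : 'rV[int]_6) :
  (forall b, character lam b = \prod_(k < 3) (Defs.comp b k o0 o0 * Defs.comp b k o1 o1)) ->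
  is_weight K lam.
Proof.
move=> chi; apply: (minor_weight minor_bottom_mull) => [b bB|].
  have <- : \prod_(k < 3)
      (Defs.comp b k o0 o0 * Defs.comp b k o1 o1 * Defs.comp b k o2 o2) = 1.
    by apply: big1 => k _; apply: inB_diag_prod.
  by rewrite chi !big_ord_recr !big_ord0 /Defs.comp /=; ring.
exists (1%:M, cyc, cyc^T); first by rewrite /inG /inSL3 /= det_tr det_cyc det1 eqxx.
by rewrite /minor /det3 /= !mxE /= !(mulr0, mul0r, mulr1, addr0, add0r) oner_neq0.
Qed.

Lemma character_rowE (f : nat -> nat) b :
  character (\row_n (f n)%:Z) b =
  b.1.1 o0 o0 ^+ f 0 * b.1.1 o1 o1 ^+ f 1 * b.1.2 o0 o0 ^+ f 2 *
  b.1.2 o1 o1 ^+ f 3 * b.2 o0 o0 ^+ f 4 * b.2 o1 o1 ^+ f 5.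
Proof.
rewrite /character !big_ord_recr !big_ord0 /= !mxE /widx !inordK //=.
rewrite /widx_row /Defs.comp /=.
by rewrite !(entryE b.1.1) !(entryE b.1.2) !(entryE b.2) /= !mul1r !mulrA.
Qed.

End Weights.

Definition weight_of (s : seq nat) : 'rV[int]_6 := \row_n (nth 0 s n)%:Z.

Definition weights : 'M[int]_6 := \matrix_i weight_of (nth [::] [::
  [:: 1; 1; 1; 0; 0; 0]; [:: 1; 1; 0; 0; 1; 0]; [:: 1; 0; 1; 1; 0; 0];
  [:: 0; 0; 1; 1; 1; 0]; [:: 1; 0; 0; 0; 1; 1]; [:: 1; 1; 1; 1; 1; 1]]%N i).

Lemma weights_row_weight (K : fieldType) (n : 'I_6) : is_weight K (row n weights).
Proof.
rewrite rowK; case: n => [[|[|[|[|[|[|//]]]]]] ?].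
- by apply: (minor_pair_weight (i := o0) (j := o1)) => // b; rewrite character_rowE; ring.
- by apply: (minor_pair_weight (i := o0) (j := o2)) => // b; rewrite character_rowE; ring.
- by apply: (minor_pair_weight (i := o1) (j := o0)) => // b; rewrite character_rowE; ring.
- by apply: (minor_pair_weight (i := o1) (j := o2)) => // b; rewrite character_rowE; ring.
- by apply: (minor_pair_weight (i := o2) (j := o0)) => // b; rewrite character_rowE; ring.
- apply: minor_bottom_weight => b.
  by rewrite character_rowE !big_ord_recr big_ord0 /Defs.comp /=; ring.
Qed.

Definition weights_adj : 'M[rat]_6 := \matrix_(i, j) (nth 0 (nth [::] [::
  [:: 0; 1; 2; -1; 1; -1]; [:: 0; 1; -1; -1; -2; 2]; [:: 3; -2; -1; 2; 1; -1];
  [:: -3; 1; 2; -1; -2; 2]; [:: 0; 1; -1; 2; 1; -1]; [:: 0; -2; -1; -1; 1; 2]]%Z i) j)%:~R.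

Lemma mul_weights_adj : map_mx intr weights *m weights_adj = 3%:M.
Proof.
apply/matrixP => i j; rewrite !mxE !big_ord_recr big_ord0 /=.
by case: i => [[|[|[|[|[|[|//]]]]]] ?]; case: j => [[|[|[|[|[|[|//]]]]]] ?];
  rewrite !mxE /=; ring.
Qed.

Lemma rank_GH6 (K : fieldType) : rank_GH K 6.
Proof.
split.
- exists (map_mx intr weights); split.
    by move=> i; exists (row i weights); [exact: weights_row_weight | rewrite map_row].
  apply/row_freeP; exists (3^-1 *: weights_adj).
  by rewrite -scalemxAr mul_weights_adj scale_scalar_mx mulVf.
- move=> M _; apply/negP => /eqP rkM.
  by have := rank_leq_col M; rewrite rkM.
Qed.

Lemma inj1_linear (K : fieldType) : linear (@inj1 K).
Proof. by move=> a u v; rewrite /inj1; congr (_, _, _); rewrite /= ?scaler0 ?addr0. Qed.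
Lemma inj2_linear (K : fieldType) : linear (@inj2 K).
Proof. by move=> a u v; rewrite /inj2; congr (_, _, _); rewrite /= ?scaler0 ?addr0. Qed.
Lemma inj3_linear (K : fieldType) : linear (@inj3 K).
Proof. by move=> a u v; rewrite /inj3; congr (_, _, _); rewrite /= ?scaler0 ?addr0. Qed.
Lemma tdiag_linear (K : fieldType) : linear (@tdiag K).
Proof. by []. Qed.
Lemma Ad_linear (K : fieldType) (g : trip K) : linear (Ad g).
Proof.
move=> a u v; rewrite /Ad /=.
by congr (_, _, _); rewrite mulmxDr mulmxDl -scalemxAr -scalemxAl.
Qed.
Lemma trace_form_linear (K : fieldType) : linear (@trace_form K).
Proof. by move=> a u v; rewrite /trace_form mxtraceD mxtraceZ raddfD /= scale_scalar_mx. Qed.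
Lemma lower_part_linear (K : fieldType) : linear (@lower_part K).
Proof.
move=> a u v; apply/matrixP => i j.
by rewrite !mxE; case: ifP; rewrite ?mulr0 ?addr0.
Qed.

HB.instance Definition _ (K : fieldType) :=
  GRing.isLinear.Build K 'M[K]_3 (trip K) _ (@inj1 K) (@inj1_linear K).
HB.instance Definition _ (K : fieldType) :=
  GRing.isLinear.Build K 'M[K]_3 (trip K) _ (@inj2 K) (@inj2_linear K).
HB.instance Definition _ (K : fieldType) :=
  GRing.isLinear.Build K 'M[K]_3 (trip K) _ (@inj3 K) (@inj3_linear K).
HB.instance Definition _ (K : fieldType) :=
  GRing.isLinear.Build K 'M[K]_3 (trip K) _ (@tdiag K) (@tdiag_linear K).
HB.instance Definition _ (K : fieldType) (g : trip K) :=
  GRing.isLinear.Build K (trip K) (trip K) _ (Ad g) (@Ad_linear K g).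
HB.instance Definition _ (K : fieldType) :=
  GRing.isLinear.Build K 'M[K]_3 'M[K]_1 _ (@trace_form K) (@trace_form_linear K).
HB.instance Definition _ (K : fieldType) :=
  GRing.isLinear.Build K 'M[K]_3 'M[K]_3 _ (@lower_part K) (@lower_part_linear K).

Section Dimensions.
Variable K : fieldType.
Implicit Type X : 'M[K]_3.

Lemma mem_sl3 X : (X \in sl3 K) = (\tr X == 0).
Proof.
rewrite memv_ker lfunE /= /trace_form.
by apply/eqP/eqP => [/matrixP/(_ 0 0)|->]; rewrite ?raddf0 // !mxE eqxx mulr1n.
Qed.

Lemma mem_b3 X : (X \in b3 K) = (\tr X == 0) && (lower_part X == 0).
Proof. by rewrite memv_cap mem_sl3 memv_ker lfunE. Qed.

Lemma dim_sl3 : \dim (sl3 K) = 8%N.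
Proof.
have := limg_ker_dim (linfun (@trace_form K)) fullv.
rewrite capfv dimvf /dim /= -/(sl3 K).
suff -> : \dim (linfun (@trace_form K) @: fullv) = 1%N.
  by move=> dim9; apply/eqP; rewrite -(eqn_add2r 1) dim9.
apply/eqP; rewrite eqn_leq (leq_trans (dimvS (subvf _))) ?dimvf // lt0n dimv_eq0.
apply: contraTneq (memv_img (linfun (@trace_form K)) (memvf (delta_mx 0 0))) => ->.
rewrite memv0 lfunE /= /trace_form; apply/eqP => /matrixP/(_ 0 0).
by rewrite trace3 !mxE /= !addr0 mulr1n => /eqP; rewrite oner_eq0.
Qed.

Definition strict_lower_basis : seq 'M[K]_3 :=
  [:: delta_mx o1 o0; delta_mx o2 o0; delta_mx o2 o1].

Lemma lower_part_sl3 :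
  (linfun (@lower_part K) @: sl3 K)%VS = <<strict_lower_basis>>%VS.
Proof.
apply/eqP; rewrite eqEsubv; apply/andP; split.
  apply/subvP => _ /memv_imgP [X _ ->]; rewrite lfunE /=.
  have -> : lower_part X = X o1 o0 *: delta_mx o1 o0 + X o2 o0 *: delta_mx o2 o0
                            + X o2 o1 *: delta_mx o2 o1.
    apply/matrixP => i j; rewrite !mxE.
    by case: i => [[|[|[|//]]] ?]; case: j => [[|[|[|//]]] ?];
      rewrite /= !(entryE X) /=; ring.
  by rewrite !memvD // memvZ // memv_span // !inE eqxx ?orbT.
apply/span_subvP => E basisE.
have [lpE trE] : lower_part E = E /\ \tr E = 0.
  move: basisE; rewrite !inE => /or3P [] /eqP ->; split;
    rewrite ?trace3 ?mxE /= ?addr0 //; apply/matrixP => i j; rewrite !mxE;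
    by case: i => [[|[|[|//]]] ?]; case: j => [[|[|[|//]]] ?].
by rewrite -lpE -(lfunE (@lower_part K)) memv_img // mem_sl3 trE.
Qed.

Lemma strict_lower_basis_free : free strict_lower_basis.
Proof.
apply/freeP => k /matrixP sum0 i.
have := sum0 o1 o0; have := sum0 o2 o0; have := sum0 o2 o1.
rewrite !big_ord_recr big_ord0 /= !mxE /= !mulr0 !mulr1 !addr0 !add0r => k2 k1 k0.
case: i => [[|[|[|//]]] ?]; [rewrite -k0 | rewrite -k1 | rewrite -k2].
all: by congr k; apply: val_inj.
Qed.

Lemma dim_b3 : \dim (b3 K) = 5%N.
Proof.
have := limg_ker_dim (linfun (@lower_part K)) (sl3 K).
rewrite lower_part_sl3 (eqP strict_lower_basis_free) dim_sl3 => dim8.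
by apply/eqP; rewrite -(eqn_add2r 3) dim8.
Qed.

Lemma dim_img_inj (aT rT : vectType K) (f : {linear aT -> rT}) (U : {vspace aT}) :
  injective f -> \dim (linfun f @: U) = \dim U.
Proof.
move=> injf; apply: limg_dim_eq.
have /lker0P/eqP -> : injective (linfun f) by move=> x y; rewrite !lfunE; apply: injf.
exact: capv0.
Qed.

Lemma dim_inj123 (U V W : {vspace 'M[K]_3}) :
  \dim (linfun (@inj1 K) @: U + linfun (@inj2 K) @: V + linfun (@inj3 K) @: W)%VS =
  (\dim U + \dim V + \dim W)%N.
Proof.
rewrite dimv_disjoint_sum; last first.
  apply/eqP; rewrite -subv0; apply/subvP => t; rewrite memv_cap memv0.
  case/andP => /memv_addP [_ /memv_imgP [x _ ->] [_ /memv_imgP [y _ ->] ->]].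
  case/memv_imgP => z _; rewrite !lfunE /= => -[x0 y0 _].
  by rewrite addr0 in x0; rewrite add0r in y0; rewrite x0 y0 !raddf0 addr0.
rewrite dimv_disjoint_sum; last first.
  apply/eqP; rewrite -subv0; apply/subvP => t; rewrite memv_cap memv0.
  case/andP => /memv_imgP [x _ ->] /memv_imgP [y _]; rewrite !lfunE /= => -[x0 _].
  by rewrite x0 raddf0.
by rewrite !dim_img_inj // => x y [].
Qed.

Lemma dim_gLie : \dim (gLie K) = 24%N.
Proof. by rewrite dim_inj123 dim_sl3. Qed.

Lemma dim_bLie : \dim (bLie K) = 15%N.
Proof. by rewrite dim_inj123 dim_b3. Qed.

Lemma dim_hdiag : \dim (hdiag K) = 8%N.
Proof. by rewrite dim_img_inj ?dim_sl3 // => x y []. Qed.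

Lemma dim_Ad_bLie (g : trip K) : (\dim (linfun (Ad g) @: bLie K) <= 15)%N.
Proof. by rewrite -dim_bLie -(limg_ker_dim (linfun (Ad g)) (bLie K)) leq_addl. Qed.

Lemma inG_Ad_inj (g : trip K) : inG g -> injective (Ad g).
Proof.
have conj_inj (A : 'M[K]_3) : inSL3 A -> injective (fun X => A *m X *m invmx A).
  rewrite /inSL3 => /eqP detA; have uA : A \in unitmx by rewrite unitmxE detA unitr1.
  by move=> X Y /(can_inj (mulmxKV uA)) /(can_inj (mulKmx uA)).
case: g => [[g1 g2] g3] /and3P [/conj_inj i1 /conj_inj i2 /conj_inj i3].
by move=> [[X1 X2] X3] [[Y1 Y2] Y3] [/i1 -> /i2 -> /i3 ->].
Qed.

End Dimensions.

Section Conjugates.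
Variable K : fieldType.
Implicit Types x s : 'M[K]_3.

Definition w0 : 'M[K]_3 := delta_mx o0 o2 - delta_mx o1 o1 + delta_mx o2 o0.
Definition unip : 'M[K]_3 := 1%:M + delta_mx o1 o0 + delta_mx o2 o0.

Lemma det_w0 : \det w0 = 1.
Proof. by rewrite det3E /det3 !mxE /=; ring. Qed.

Lemma det_unip : \det unip = 1.
Proof. by rewrite det3E /det3 !mxE /=; ring. Qed.

Lemma lower_part_eq0 s : lower_part s = 0 -> upper3 s.
Proof.
move/matrixP => s0.
by split; [move: (s0 o1 o0) | move: (s0 o2 o0) | move: (s0 o2 o1)]; rewrite !mxE.
Qed.

(* [w0] conjugates the upper Borel subalgebra onto the lower one. *)
Lemma conj_w0_lower x s : lower_part s = 0 -> x *m w0 = w0 *m s ->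
  [/\ x o0 o1 = 0, x o0 o2 = 0 & x o1 o2 = 0].
Proof.
move=> /lower_part_eq0 [s10 s20 s21] /matrixP xw.
move: (xw o0 o1) (xw o0 o0) (xw o1 o0) s10 s20 s21.
rewrite !mxE !big_ord_recr !big_ord0 /= !mxE /= !(entryE x) !(entryE s) /=.
rewrite !(oppr0, mulr0, mul0r, add0r, addr0, sub0r, mulr1, mulN1r, mulrN1).
move=> e01 e02 e12 s10 s20 s21; rewrite s10 s20 s21 oppr0 mulr0 in e01 e02 e12.
by split=> //; rewrite -[LHS]opprK e01 oppr0.
Qed.

Lemma conj_unip_row_sum x s : lower_part s = 0 -> x *m unip = unip *m s ->
  forall i, \sum_j x i j = s o0 o0.
Proof.
move=> /lower_part_eq0 [s10 s20 _] /matrixP xu i; rewrite -[RHS]/(s o0 o0).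
transitivity ((x *m unip) i o0).
  rewrite mxE; apply: eq_bigr => -[[|[|[|//]]] ?] _;
  by rewrite !mxE /= ?addr0 ?add0r mulr1.
rewrite xu mxE !big_ord_recr big_ord0 /= !mxE; move: s10 s20; rewrite !(entryE s).
by case: i => [[|[|[|//]]] ?] /= -> ->; ring.
Qed.

(* The upper Borel subalgebra meets its conjugates by [w0] and by [unip]
   only in the scalars, and [sl3] contains no nonzero scalar. *)
Lemma borel_conj_cap_eq0 x s2 s3 : (3%:R : K) != 0 ->
  \tr x = 0 -> lower_part x = 0 -> lower_part s2 = 0 -> lower_part s3 = 0 ->
  x *m w0 = w0 *m s2 -> x *m unip = unip *m s3 -> x = 0.
Proof.
move=> n3 tx lx ls2 ls3 xw xu.
have [x10 x20 x21] := lower_part_eq0 lx.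
have [x01 x02 x12] := conj_w0_lower ls2 xw.
have := conj_unip_row_sum ls3 xu; set c := s3 o0 o0 => rs.
have [x00 x11 x22] : [/\ x o0 o0 = c, x o1 o1 = c & x o2 o2 = c].
  move: (rs o0) (rs o1) (rs o2) x10 x20 x21 x01 x02 x12.
  rewrite !big_ord_recr !big_ord0 /= !(entryE x) /= => r0 r1 r2 e10 e20 e21 e01 e02 e12.
  by split; [rewrite -r0 | rewrite -r1 | rewrite -r2];
    rewrite ?e10 ?e20 ?e21 ?e01 ?e02 ?e12; ring.
have c0 : c = 0.
  apply/eqP; rewrite -(mulrI_eq0 _ (lregP n3)); apply/eqP.
  by rewrite -tx trace3 x00 x11 x22; ring.
move: x00 x11 x22 x01 x02 x12 x10 x20 x21; rewrite c0 !(entryE x) /= => *.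
by apply/matrixP => -[[|[|[|//]]] ?] [[|[|[|//]]] ?]; rewrite mxE (entryE x).
Qed.

End Conjugates.

Section Complexity.
Variable K : fieldType.

Definition g0 : trip K := (1%:M, w0 K, unip K).

Lemma inG_g0 : inG g0.
Proof. by rewrite /inG /inSL3 /= det1 det_w0 det_unip eqxx. Qed.

Lemma hdiag_cap_Ad_g0 :
  (3%:R : K) != 0 -> (hdiag K :&: linfun (Ad g0) @: bLie K = 0)%VS.
Proof.
move=> n3; apply/eqP; rewrite -subv0; apply/subvP => t; rewrite memv_cap memv0.
case/andP => /memv_imgP [x sl3x ->] /memv_imgP [_ /memv_addP [_ /memv_addP
  [_ /memv_imgP [s1 bs1 ->] [_ /memv_imgP [s2 bs2 ->] ->]] [_ /memv_imgP [s3 bs3 ->] ->]]].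
rewrite !lfunE /= /tdiag /Ad /= !addr0 !add0r invmx1 mul1mx mulmx1 => -[x1 x2 x3].
have unitw0 : w0 K \in unitmx by rewrite unitmxE det_w0 unitr1.
have unitu : unip K \in unitmx by rewrite unitmxE det_unip unitr1.
move: sl3x bs1 bs2 bs3; rewrite mem_sl3 !mem_b3 -x1 => /eqP tx /andP [_ /eqP lx].
move=> /andP [_ /eqP ls2] /andP [_ /eqP ls3].
rewrite (borel_conj_cap_eq0 n3 tx lx ls2 ls3) ?raddf0 //.
  by rewrite x2 mulmxKV.
by rewrite x3 mulmxKV.
Qed.

Lemma codim_at_gt0 (g : trip K) : (0 < codim_at (hdiag K) g)%N.
Proof.
rewrite /codim_at dim_gLie subn_gt0.
apply: leq_ltn_trans (dimv_add_leqif _ _).1 _.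
by rewrite dim_hdiag -[24%N]/(8 + 16)%N ltn_add2l ltnS dim_Ad_bLie.
Qed.

Lemma codim_at_g0 : (3%:R : K) != 0 -> codim_at (hdiag K) g0 = 1%N.
Proof.
move=> n3; rewrite /codim_at dim_gLie dimv_disjoint_sum ?hdiag_cap_Ad_g0 //.
by rewrite dim_hdiag dim_img_inj ?dim_bLie //; apply/inG_Ad_inj/inG_g0.
Qed.

Lemma complexity_hdiag : (3%:R : K) != 0 -> is_complexity (hdiag K) 1.
Proof.
move=> n3; split; first by exists g0; [exact: inG_g0 | exact: codim_at_g0].
by move=> g _; apply: codim_at_gt0.
Qed.

End Complexity.

Theorem mainTheorem8 (K : closedFieldType) (char0 : [pchar K] =i pred0) :
  is_complexity (hdiag K) 1 /\ rank_GH K 6.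
Proof.
split; last exact: rank_GH6.
by apply: complexity_hdiag; move/pcharf0P: char0 => ->.
Qed.
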